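(* Let $S$ and $T$ be bottomed linearly ordered sets and let $\psi\colon S\to T$ satisfy: (1) $\psi$ is isotone; (2) if $\psi(x)=\perp_T$ then $x=\perp_S$; (3) $\psi$ is continuous at $\perp_S$, i.e. for every $\epsilon\in T^*$ there exists $\delta\in S^*$ such that $x<\delta$ implies $\psi(x)<\epsilon$. Let $X$ be a topological space and $d\in\mathrm{Ult}(X;S)$. Then $\psi\circ d\in\mathrm{Ult}(X;T)$, $d$ and $\psi\circ d$ generate the same topology on $X$, and moreover they are uniformly equivalent to each other.
   Context: A bottomed linearly ordered set $S$ has a least element $\perp_S$; $S^*=S\setminus\{\perp_S\}$. A map is isotone if $x\le y$ implies $\psi(x)\le\psi(y)$. An $S$-ultrametric on $X$ is $d\colon X\times X\to S$ with $d(x,y)=\perp_S\iff x=y$, $d(x,y)=d(y,x)$, and $d(x,y)\le\max\{d(x,z),d(z,y)\}$; its topology is generated by the open balls $\{y:d(x,y)<\epsilon\}$, $\epsilon\in S^*$. $\mathrm{Ult}(X;S)$ is the set of $S$-ultrametrics generating the topology of $X$. An $S$-ultrametric $d$ and a $T$-ultrametric $e$ on $X$ are uniformly equivalent if for every $\epsilon\in T^*$ there is $\delta\in S^*$ with $d(x,y)<\delta\Rightarrow e(x,y)<\epsilon$, and for every $\epsilon\in S^*$ there is $\delta\in T^*$ with $e(x,y)<\delta\Rightarrow d(x,y)<\epsilon$. *)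

From HB Require Import structures.
From mathcomp Require Import all_boot all_order.
From mathcomp Require Import boolp classical_sets topology.
Set Implicit Arguments. Unset Strict Implicit. Unset Printing Implicit Defensive.
Import Order.TTheory.
Local Open Scope order_scope.
Local Open Scope classical_set_scope.

(* A bottomed linearly ordered set is a [bOrderType dS]; its least element is
   [\bot]; S^* = S minus \bot. *)

Definition is_ultrametric {dS} (S : bOrderType dS) (X : Type) (d : X -> X -> S) : Prop :=
  [/\ (forall x y, d x y = \bot <-> x = y),
      (forall x y, d x y = d y x) &
      (forall x y z, d x y <= Order.max (d x z) (d z y))].

Definition uball {dS} (S : bOrderType dS) (X : Type) (d : X -> X -> S) (x : X) (eps : S) : set X :=
  [set y | d x y < eps].

(* open sets of the topology generated by the open balls (eps in S^* ):
   unions of open balls *)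
Definition ult_open {dS} (S : bOrderType dS) (X : Type) (d : X -> X -> S) (U : set X) : Prop :=
  forall x, U x -> exists z (eps : S), eps != \bot /\ uball d z eps x /\ uball d z eps `<=` U.

Definition Ult {dS} (S : bOrderType dS) (X : topologicalType) (d : X -> X -> S) : Prop :=
  is_ultrametric d /\ (forall U : set X, open U <-> ult_open d U).

Definition uniformly_equivalent {dS dT} (S : bOrderType dS) (T : bOrderType dT) (X : Type)
  (d : X -> X -> S) (e : X -> X -> T) : Prop :=
  (forall eps : T, eps != \bot -> exists delta : S, delta != \bot /\
     forall x y, d x y < delta -> e x y < eps) /\
  (forall eps : S, eps != \bot -> exists delta : T, delta != \bot /\
     forall x y, e x y < delta -> d x y < eps).

From HB Require Import structures.
From mathcomp Require Import all_boot all_order.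
From mathcomp Require Import boolp classical_sets topology.
Set Implicit Arguments. Unset Strict Implicit. Unset Printing Implicit Defensive.
Import Order.TTheory.
Local Open Scope order_scope.
Local Open Scope classical_set_scope.

(* Uniform equivalence makes every ball of one ultrametric contain a ball of
   the other with the same centre, and in an ultrametric space every point of
   a ball is a centre of it; hence the two families of balls generate the same
   open sets.  The monotone map psi preserves the ultrametric inequality, and
   continuity at the bottom together with isotonicity give the two halves of
   the uniform equivalence of d and psi o d. *)

Lemma ultrametric_dist_xx {dS} (S : bOrderType dS) (X : Type) (d : X -> X -> S) :
  is_ultrametric d -> forall x, d x x = \bot.
Proof. by case=> d0 _ _ x; apply/d0. Qed.

Lemma ult_open_transfer {dS dT} (S : bOrderType dS) (T : bOrderType dT) (X : Type)
    (d : X -> X -> S) (e : X -> X -> T) :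
  is_ultrametric d -> (forall x, e x x = \bot) ->
  (forall eps : S, eps != \bot -> exists delta : T, delta != \bot /\
     forall x y, e x y < delta -> d x y < eps) ->
  forall U, ult_open d U -> ult_open e U.
Proof.
move=> [_ _ d_tri] e_xx e_ctrl U dU x Ux.
have [z [eps [eps_gt0 [dzx ball_sub]]]] := dU x Ux.
have [delta [delta_gt0 hdelta]] := e_ctrl eps eps_gt0.
exists x, delta; split=> //; split; first by rewrite /uball /= e_xx lt0x.
move=> y /hdelta dxy; apply: ball_sub.
by apply: le_lt_trans (d_tri z y x) _; rewrite gt_max dzx dxy.
Qed.

Lemma ult_open_uniformly_equivalent {dS dT} (S : bOrderType dS) (T : bOrderType dT)
    (X : Type) (d : X -> X -> S) (e : X -> X -> T) :
  is_ultrametric d -> is_ultrametric e -> uniformly_equivalent d e ->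
  forall U, ult_open d U <-> ult_open e U.
Proof.
move=> d_um e_um [d_ctrl e_ctrl] U; split.
- exact: ult_open_transfer d_um (ultrametric_dist_xx e_um) e_ctrl U.
- exact: ult_open_transfer e_um (ultrametric_dist_xx d_um) d_ctrl U.
Qed.

Lemma Ult_uniformly_equivalent {dS dT} (S : bOrderType dS) (T : bOrderType dT)
    (X : topologicalType) (d : X -> X -> S) (e : X -> X -> T) :
  Ult d -> is_ultrametric e -> uniformly_equivalent d e -> Ult e.
Proof.
move=> [d_um d_top] e_um de; split=> // U.
by rewrite d_top; apply: ult_open_uniformly_equivalent.
Qed.

Section IsotoneRescaling.
Variables (dS dT : Order.disp_t) (S : bOrderType dS) (T : bOrderType dT).
Variable psi : S -> T.
Hypothesis psi_iso : {homo psi : x y / x <= y}.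
Hypothesis psi_bot : forall x : S, psi x = \bot -> x = \bot.
Hypothesis psi_cont : forall eps : T, eps != \bot -> exists delta : S,
  delta != \bot /\ forall x : S, x < delta -> psi x < eps.

Lemma rescale_bot : psi \bot = \bot.
Proof.
apply/eqP; apply: contraT => psi0_gt0.
have [delta [delta_gt0 hdelta]] := psi_cont psi0_gt0.
by have := hdelta \bot; rewrite lt0x delta_gt0 ltxx => /(_ isT).
Qed.

Lemma rescale_neq_bot (x : S) : x != \bot -> psi x != \bot.
Proof. by apply: contra => /eqP /psi_bot ->. Qed.

Lemma rescale_max (x y : S) : psi (Order.max x y) = Order.max (psi x) (psi y).
Proof.
case: (leP x y) => [/psi_iso xy | /ltW /psi_iso yx].
- by rewrite (max_idPr xy).
- by rewrite (max_idPl yx).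
Qed.

Variables (X : Type) (d : X -> X -> S).

Lemma is_ultrametric_rescale :
  is_ultrametric d -> is_ultrametric (fun x y => psi (d x y)).
Proof.
move=> /[dup] d_um [d0 d_sym d_tri]; split=> [x y|x y|x y z].
- split; first by move/psi_bot/d0.
  by move=> ->; rewrite (ultrametric_dist_xx d_um) rescale_bot.
- by rewrite d_sym.
- by rewrite -rescale_max; apply/psi_iso/d_tri.
Qed.

Lemma uniformly_equivalent_rescale :
  uniformly_equivalent d (fun x y => psi (d x y)).
Proof.
split=> eps /[dup] eps_gt0.
- move=> /psi_cont [delta [delta_gt0 hdelta]].
  by exists delta; split=> // x y /hdelta.
- move=> _; exists (psi eps); split; first exact: rescale_neq_bot.
  by move=> x y; rewrite !ltNge; apply: contra => /psi_iso.
Qed.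

End IsotoneRescaling.

Theorem lemma2p36 {dS dT} (S : bOrderType dS) (T : bOrderType dT) (psi : S -> T)
  (psi_iso : forall x y : S, x <= y -> psi x <= psi y)
  (psi_bot : forall x : S, psi x = \bot -> x = \bot)
  (psi_cont : forall eps : T, eps != \bot -> exists delta : S, delta != \bot /\
                forall x : S, x < delta -> psi x < eps)
  (X : topologicalType) (d : X -> X -> S) (hd : Ult d) :
  Ult (fun x y => psi (d x y)) /\
  (forall U : set X, ult_open d U <-> ult_open (fun x y => psi (d x y)) U) /\
  uniformly_equivalent d (fun x y => psi (d x y)).
Proof.
have psi_um := is_ultrametric_rescale psi_iso psi_bot psi_cont hd.1.
have psi_ue := uniformly_equivalent_rescale psi_iso psi_bot psi_cont d.
split; first exact: Ult_uniformly_equivalent psi_um psi_ue.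
split=> //; exact: ult_open_uniformly_equivalent hd.1 psi_um psi_ue.
Qed.
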